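(* Let $\mathbf{MB}$ be the modification of a Standard Bloom filter in which each hash function $h_i$ ($i\in[k]$) is replaced by a truly random function $f_i : U \to [m]$. Let $\varepsilon\in(0,1)$ and $n\in\mathbb{N}$. Then $\mathbf{MB}$ is not $(n,t,\delta)$-resilient under the BP test for any $t\in\mathbb{N}$ and any $\delta\in(0,1)$ with $\delta<p_s$, where $p_s$ is the saturation probability of $\mathbf{MB}$.
   Context: A Standard Bloom filter with parameters $m,k$ stores a set $S\subseteq U$ (a finite universe of size $u$) as a bit string $M\in\{0,1\}^m$, initially all zeros, by setting bit $h_i(x)$ to $1$ for every $x\in S$ and $i\in[k]$, where $h_i:U\to[m]$; a query on $x$ returns $1$ iff all bits $h_i(x)$, $i\in[k]$, equal $1$. In $\mathbf{MB}$ the $h_i$ are truly random functions $f_i$. The saturation probability $p_s$ is the probability that, after encoding a set of size $n$, every bit of $M$ equals $1$. An element $x\notin S$ with query answer $1$ is a false positive. BP test with parameter $\delta$ (for an $(n,\delta)$-Bloom filter $\mathbf{B}=(\mathbf{B}_1,\mathbf{B}_2)$, security parameter $\lambda$): an adversary $\mathcal{A}=(\mathcal{A}_1,\mathcal{A}_2)$ plays: $\mathcal{A}_1(1^{\lambda+n\log u})$ outputs $S\subseteq U$ with $|S|=n$; $M\gets\mathbf{B}_1(1^{\lambda+n\log u},S)$; $\mathcal{A}_2(1^{\lambda+n\log u},S)$ makes at most $t$ adaptive queries $x_1,\dots,x_t$ to $\mathbf{B}_2(M,\cdot)$ and then outputs $(b,x^* )$ with $b\in\{0,1\}$ and $x^*\notin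 S\cup\{x_1,\dots,x_t\}$. The profit $C_{\mathcal{A}}$ is $1/\delta$ if $b=1$ and $x^*$ is a false positive, $-1/(1-\delta)$ if $b=1$ and $x^*$ is not a false positive, and $0$ if $b=0$. $\mathbf{B}$ is $(n,t,\delta)$-resilient under the BP test if for every adversary there is a negligible function $\mathrm{negl}$ with $\mathbb{E}[C_{\mathcal{A}}]\le\mathrm{negl}(\lambda)$, the expectation over the randomness of $\mathbf{B}$ and $\mathcal{A}$. *)

From HB Require Import structures.
From mathcomp Require Import all_boot all_order all_algebra.
Unset Printing Implicit Defensive.
Import Order.TTheory GRing.Theory Num.Theory.
Local Open Scope ring_scope.

Section BloomDefs.
Variables (R : realFieldType) (U : finType) (m k : nat).

(* The random choice of MB: k truly random functions f_i : U -> [m]. *)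
Definition hashes := {ffun 'I_k -> {ffun U -> 'I_m}}.

Definition encode (f : hashes) (S : {set U}) : {ffun 'I_m -> bool} :=
  [ffun j => [exists i : 'I_k, exists x in S, f i x == j]].

Definition query (f : hashes) (M : {ffun 'I_m -> bool}) (x : U) : bool :=
  [forall i : 'I_k, M (f i x)].

Definition prob_hashes (P : pred hashes) : R :=
  (\sum_(f : hashes | P f) 1) / #|{: hashes}|%:R.

Definition canon_set (n : nat) : {set U} := [set x in take n (enum U)].

(* saturation probability p_s: after encoding a set of size n, all bits are 1
   (for truly random functions this does not depend on the chosen set) *)
Definition sat_prob (n : nat) : R :=
  prob_hashes (fun f => [forall j : 'I_m, encode f (canon_set n) j]).

(* A (possibly randomized, computationally unbounded) adversary, as a family
   indexed by the security parameter lambda.  A1 and A2 use independent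
   random coins drawn from finite distributions p1, p2.  A2 is adaptive: given
   the history of (query, answer) pairs it either asks a new query (Some x)
   or stops (None); its final output (b, x* ) is a function of the history. *)
Record adversary := Adversary {
  C1 : nat -> finType;
  p1 : forall l, {ffun C1 l -> R};
  A1 : forall l, C1 l -> {set U};
  C2 : nat -> finType;
  p2 : forall l, {ffun C2 l -> R};
  A2q : forall l, {set U} -> C2 l -> seq (U * bool) -> option U;
  A2o : forall l, {set U} -> C2 l -> seq (U * bool) -> bool * U
}.

Arguments p1 : clear implicits.
Arguments A1 : clear implicits.
Arguments p2 : clear implicits.
Arguments A2q : clear implicits.
Arguments A2o : clear implicits.

Definition is_distr {T : finType} (p : {ffun T -> R}) : Prop :=
  (forall c, 0 <= p c) /\ \sum_c p c = 1.

Definition valid_adversary (n : nat) (A : adversary) : Prop :=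
  forall l, is_distr (p1 A l) /\ is_distr (p2 A l) /\
            (forall c, #|A1 A l c| = n).

Fixpoint run_queries (q : seq (U * bool) -> option U)
    (ans : U -> bool) (fuel : nat) (h : seq (U * bool)) : seq (U * bool) :=
  match fuel with
  | 0 => h
  | fuel'.+1 =>
      match q h with
      | None => h
      | Some x => run_queries q ans fuel' (rcons h (x, ans x))
      end
  end.

(* profit C_A of one run; an output x* in S or among the queries is not a
   legal output and is counted as abstaining (profit 0) *)
Definition profit (delta : R) (t : nat) (A : adversary) (l : nat)
    (f : hashes) (c1 : C1 A l) (c2 : C2 A l) : R :=
  let S := A1 A l c1 in
  let M := encode f S in
  let h := run_queries (A2q A l S c2) (query f M) t [::] in
  let (b, xs) := A2o A l S c2 h in
  if b && (xs \notin S) && (xs \notin map fst h) then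
    (if query f M xs then delta^-1 else - (1 - delta)^-1)
  else 0.

Definition exp_profit (delta : R) (t : nat) (A : adversary) (l : nat) : R :=
  \sum_(f : hashes) \sum_(c1 : C1 A l) \sum_(c2 : C2 A l)
     (#|{: hashes}|%:R)^-1 * p1 A l c1 * p2 A l c2 * profit delta t A l f c1 c2.

Definition negligible (g : nat -> R) : Prop :=
  forall c : nat, exists N : nat, forall l : nat, (N <= l)%N ->
    `|g l| <= ((l%:R) ^+ c)^-1.

Definition BP_resilient (n t : nat) (delta : R) : Prop :=
  forall A : adversary, valid_adversary n A ->
    exists g : nat -> R, negligible g /\
      forall l : nat, exp_profit delta t A l <= g l.

End BloomDefs.

From HB Require Import structures.
From mathcomp Require Import all_boot all_order all_algebra.
From mathcomp Require Import ring lra zify.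
Import Order.TTheory GRing.Theory Num.Theory.
Local Open Scope ring_scope.

(* The adversary commits to a set S and, without querying, bets that a fixed
   x* outside S is a false positive.  Its expected profit is
   (P[x* false positive] - delta) / (delta (1 - delta)), and this probability
   is at least the saturation probability p_s > delta.  Since the field R may
   be non-archimedean, a positive profit is not enough to contradict
   negligibility: we show it exceeds 1/N, N the number of hash families.  This
   holds because the false-positive count strictly exceeds the saturation
   count (a constant family is a false positive but not saturating when
   m >= 2), while for m = 1 every family is a false positive. *)

Lemma sumr_indicator (R : pzSemiRingType) (I : finType) (P : pred I) :
  \sum_i (P i)%:R = #|P|%:R :> R.
Proof.
rewrite -sum1_card natr_sum [RHS]big_mkcond.
by apply: eq_bigr => i _; rewrite unfold_in; case: (P i).
Qed.

Section Saturation.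
Variables (U : finType) (m k : nat) (S : {set U}).

Definition saturated : pred (hashes U m k) :=
  fun f => [forall j, encode U m k f S j].

Definition false_positive (x : U) : pred (hashes U m k) :=
  fun f => query U m k f (encode U m k f S) x.

Definition const_hashes (j : 'I_m) : hashes U m k := [ffun=> [ffun=> j]].

Lemma const_hashesE (j : 'I_m) i x : const_hashes j i x = j.
Proof. by rewrite !ffunE. Qed.

Lemma saturated_false_positive f x : saturated f -> false_positive x f.
Proof. by move=> /forallP satf; apply/forallP. Qed.

Lemma saturated_hit f :
  saturated f -> forall j : 'I_m, exists i : 'I_k, exists2 s, s \in S & f i s = j.
Proof.
move=> /forallP satf j; move: (satf j); rewrite /encode ffunE.
by move=> /existsP[i /existsP[s /andP[sS /eqP fis]]]; exists i, s.
Qed.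

Lemma encode_const (j : 'I_m) (i : 'I_k) s :
  s \in S -> encode U m k (const_hashes j) S j.
Proof.
move=> sS; rewrite /encode ffunE; apply/existsP; exists i.
by apply/existsP; exists s; rewrite sS const_hashesE eqxx.
Qed.

Lemma const_false_positive (j : 'I_m) (i : 'I_k) s x :
  s \in S -> false_positive x (const_hashes j).
Proof. by move=> sS; apply/forallP => i'; rewrite const_hashesE; exact: encode_const sS. Qed.

Lemma const_not_saturated (j j' : 'I_m) : j != j' -> ~~ saturated (const_hashes j).
Proof.
move=> jj'; apply/negP => /saturated_hit/(_ j')[i [s _]].
by rewrite const_hashesE => /eqP; rewrite (negbTE jj').
Qed.

Lemma saturated_all (i : 'I_k) s : (m <= 1)%N -> s \in S -> forall f, saturated f.
Proof.
move=> m_le1 sS f; apply/forallP => j; rewrite /encode ffunE.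
apply/existsP; exists i; apply/existsP; exists s; rewrite sS /=.
by apply/eqP/val_inj; case: (f i s) j => a ha [b hb] /=; lia.
Qed.

Lemma card_saturated_lt_false_positive_or_full x (i : 'I_k) s : s \in S ->
  (#|saturated| < #|false_positive x|)%N \/
  #|false_positive x| = #|{: hashes U m k}|.
Proof.
move=> sS; have [m_le1 | m_gt1] := leqP m 1.
  right; apply: eq_card => f; rewrite !inE.
  exact/saturated_false_positive/(saturated_all i _ m_le1 sS).
left; apply/proper_card/properP; split.
  by apply/subsetP => f; exact: saturated_false_positive.
pose j0 : 'I_m := Ordinal (ltnW m_gt1); pose j1 : 'I_m := Ordinal m_gt1.
exists (const_hashes j0); first exact: const_false_positive i _ _ sS.
exact: (const_not_saturated j0 j1).
Qed.

End Saturation.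

Section Guessing.
Variables (R : realFieldType) (U : finType) (m k : nat).

Lemma card_hashes_gt0 : (0 < m)%N -> (0 < #|{: hashes U m k}|)%N.
Proof. by move=> m_gt0; apply/card_gt0P; exists [ffun=> [ffun=> Ordinal m_gt0]]. Qed.

Lemma prob_hashesE (P : pred (hashes U m k)) :
  prob_hashes R U m k P = #|P|%:R / #|{: hashes U m k}|%:R.
Proof. by rewrite /prob_hashes sumr_const. Qed.

Lemma sat_probE n :
  sat_prob R U m k n =
  #|saturated U m k (canon_set U n)|%:R / #|{: hashes U m k}|%:R.
Proof. exact: prob_hashesE. Qed.

Definition guess_adversary (S : {set U}) (xs : U) : adversary R U :=
  Adversary R U (fun=> unit) (fun=> [ffun=> 1]) (fun _ _ => S)
            (fun=> unit) (fun=> [ffun=> 1])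
            (fun _ _ _ _ => None) (fun _ _ _ _ => (true, xs)).

Lemma guess_adversary_valid (S : {set U}) xs :
  valid_adversary R U #|S| (guess_adversary S xs).
Proof.
have unit_distr : is_distr R ([ffun=> 1] : {ffun unit -> R}).
  by split=> [c|]; rewrite ?ffunE // (big_pred1 tt) ?ffunE // => -[].
by move=> l; split; [|split].
Qed.

Lemma bet_payoffE (delta : R) (b : bool) : delta != 0 -> 1 - delta != 0 ->
  (if b then delta^-1 else - (1 - delta)^-1) = (b%:R - delta) / (delta * (1 - delta)).
Proof. by move=> d0 d1; case: b => /=; field; rewrite d0 d1. Qed.

Lemma exp_profit_guess (S : {set U}) xs (delta : R) t l :
  (0 < m)%N -> xs \notin S -> delta != 0 -> 1 - delta != 0 ->
  exp_profit R U m k delta t (guess_adversary S xs) l =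
  (prob_hashes R U m k (false_positive U m k S xs) - delta) / (delta * (1 - delta)).
Proof.
move=> m_gt0 xsS d0 d1.
have no_queries ans : run_queries U (fun=> None) ans t [::] = [::] by case: t.
have N0 : #|{: hashes U m k}|%:R != 0 :> R.
  by rewrite pnatr_eq0 -lt0n card_hashes_gt0.
rewrite prob_hashesE /exp_profit.
under eq_bigr => f _.
  rewrite (big_pred1 tt) // (big_pred1 tt) // !ffunE !mulr1.
  rewrite /profit /= no_queries /= xsS bet_payoffE //.
  over.
rewrite -mulr_sumr -mulr_suml sumrB sumr_indicator sumr_const -mulr_natr.
by field; rewrite N0 d0 d1.
Qed.

End Guessing.

Section Arithmetic.
Variable R : realFieldType.

Lemma bet_profit_gt_inv (delta : R) (N s q : nat) :
  0 < delta < 1 -> (0 < N)%N -> delta < s%:R / N%:R -> (s < q)%N \/ q = N ->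
  N%:R^-1 < (q%:R / N%:R - delta) / (delta * (1 - delta)).
Proof.
move=> /andP[d0 d1] N_gt0; have NR0 : 0 < N%:R :> R by rewrite ltr0n.
rewrite ltr_pdivlMr // => sN sq.
have gap : delta * (1 - delta) < q%:R - N%:R * delta.
  case: sq => [sq | ->].
    by move: sq; rewrite -(ler_nat R) -addn1 natrD; nra.
  have N1 : 1 <= N%:R :> R by rewrite ler1n.
  nra.
have -> : (q%:R / N%:R - delta) / (delta * (1 - delta))
        = (q%:R - N%:R * delta) / (delta * (1 - delta)) / N%:R.
  by field; rewrite !gt_eqF // subr_gt0.
rewrite ltr_pdivlMr // mulVf ?gt_eqF // ltr_pdivlMr ?mulr_gt0 ?subr_gt0 //.
by rewrite mul1r.
Qed.

Lemma not_negligible_gt_inv (g : nat -> R) (N : nat) :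
  (0 < N)%N -> (forall l, N%:R^-1 < g l) -> ~ negligible R g.
Proof.
move=> N_gt0 Ng /(_ 1%N)[N1 gN1].
have := gN1 (N1 + N)%N (leq_addr _ _); rewrite expr1 => gl.
have LN : (N1 + N)%:R^-1 <= N%:R^-1 :> R.
  by rewrite lef_pV2 ?posrE ?ltr0n ?addn_gt0 ?N_gt0 ?orbT // ler_nat leq_addl.
have := Ng (N1 + N)%N; have := ler_norm (g (N1 + N)%N); lra.
Qed.

End Arithmetic.

Lemma card_canon_set (U : finType) n : (n <= #|U|)%N -> #|canon_set U n| = n.
Proof.
move=> n_le; rewrite /canon_set cardsE (card_uniqP _) ?size_takel -?cardE //.
by rewrite take_uniq ?enum_uniq.
Qed.

Lemma exists_notin_small_set (U : finType) (S : {set U}) :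
  (#|S| < #|U|)%N -> exists x, x \notin S.
Proof.
move=> S_lt; have /card_gt0P[x] : (0 < #|~: S|)%N by rewrite cardsCs setCK subn_gt0.
by rewrite inE; exists x.
Qed.

Theorem mainTheorem5 (R : realFieldType) (U : finType) (m k n : nat)
    (eps : R) (heps : 0 < eps < 1) (hm : (0 < m)%N) (hn : (n < #|U|)%N) :
  forall (t : nat) (delta : R), 0 < delta < 1 ->
    delta < sat_prob R U m k n ->
    ~ BP_resilient R U m k n t delta.
Proof.
move=> t delta delta01 delta_lt_sat; have /andP[d0 d1] := delta01.
set S := canon_set U n.
have cardS : #|S| = n by apply/card_canon_set/ltnW.
have [xs xsS] : exists xs, xs \notin S by apply: exists_notin_small_set; rewrite cardS.
have N_gt0 := @card_hashes_gt0 U m k hm.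
have [? /saturated_hit/(_ (Ordinal hm))[i [s sS _]]] :
    exists f, f \in saturated U m k S.
  apply/card_gt0P; move: delta_lt_sat; rewrite (sat_probE R) lt0n.
  by apply: contraTneq => ->; rewrite mul0r -leNgt ltW.
have := guess_adversary_valid R U S xs; rewrite cardS => valid.
move=> /(_ _ valid)[g [negl profit_le_g]].
apply: (not_negligible_gt_inv _ _ _ N_gt0 _ negl) => l.
apply: lt_le_trans (profit_le_g l).
rewrite exp_profit_guess ?gt_eqF ?subr_gt0 // prob_hashesE.
apply: (bet_profit_gt_inv _ _ _ #|saturated U m k S|) => //.
  by rewrite -sat_probE.
exact: card_saturated_lt_false_positive_or_full sS.
Qed.
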